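(* For every program $\Pi$ with nested expressions, a set $X$ of atoms is a stable model of $\Pi$ (as a theory, in the sense defined below) if and only if $X$ is a stable model of $\Pi$ in the sense of Lifschitz, Tang and Turner (1999), i.e. iff $X$ is a minimal (with respect to set inclusion) set of atoms satisfying $\Pi^{\underline X}$.
   Context: Fix a set of propositional atoms. Formulas are built from atoms and $\bot$ using the binary connectives $\wedge,\vee,\to$; $\top$ abbreviates $\bot\to\bot$, $\neg F$ abbreviates $F\to\bot$. A theory is a set of formulas; $X\models F$ denotes classical satisfaction by the set of atoms $X$. The reduct $F^X$: $\bot^X=\bot$; for an atom $a$, $a^X=a$ if $a\in X$ and $\bot$ otherwise; for $\otimes\in\{\wedge,\vee,\to\}$, $(F\otimes G)^X=F^X\otimes G^X$ if $X\models F\otimes G$, and $\bot$ otherwise; $\Gamma^X=\{F^X:F\in\Gamma\}$. $X$ is a stable model of a theory $\Gamma$ if $X\models\Gamma^X$ and no proper subset of $X$ satisfies $\Gamma^X$. A nested expression is a formula containing no implications other than those of the form $\neg F$ or $\top$. A program with nested expressions is a set of rules $F\leftarrow G$ (identified with $G\to F$) where $F,G$ are nested expressions. The reduct $\Pi^{\underline X}$ is obtained from $\Pi$ by replacing, in each rule, each maximal subformula of the form $\neg F$ by $\top$ if $X\models\neg F$ and by $\bot$ otherwise. *)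

From Stdlib Require Import Bool.

Set Implicit Arguments.

Inductive form (A : Type) : Type :=
| Atom : A -> form A
| Bot : form A
| And : form A -> form A -> form A
| Or : form A -> form A -> form A
| Imp : form A -> form A -> form A.

Arguments Bot {A}.

Definition Top {A : Type} : form A := Imp Bot Bot.
Definition Neg {A : Type} (F : form A) : form A := Imp F Bot.

(* A set of atoms is given by its characteristic function (classically every
   set of atoms has one). *)
Definition atomset (A : Type) := A -> bool.

Fixpoint sat {A : Type} (X : atomset A) (F : form A) : bool :=
  match F with
  | Atom a => X a
  | Bot => false
  | And F G => sat X F && sat X G
  | Or F G => sat X F || sat X G
  | Imp F G => implb (sat X F) (sat X G)
  end.

Definition theory (A : Type) := form A -> Prop.

Definition sat_theory {A : Type} (X : atomset A) (T : theory A) : Prop :=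
  forall F, T F -> sat X F = true.

Fixpoint reduct {A : Type} (X : atomset A) (F : form A) : form A :=
  match F with
  | Atom a => if X a then Atom a else Bot
  | Bot => Bot
  | And G H => if sat X (And G H) then And (reduct X G) (reduct X H) else Bot
  | Or G H => if sat X (Or G H) then Or (reduct X G) (reduct X H) else Bot
  | Imp G H => if sat X (Imp G H) then Imp (reduct X G) (reduct X H) else Bot
  end.

Definition reduct_theory {A : Type} (X : atomset A) (T : theory A) : theory A :=
  fun H => exists F, T F /\ H = reduct X F.

Definition proper_subset {A : Type} (Y X : atomset A) : Prop :=
  (forall a, Y a = true -> X a = true) /\ (exists a, X a = true /\ Y a = false).

Definition stable_model_theory {A : Type} (T : theory A) (X : atomset A) : Prop :=
  sat_theory X (reduct_theory X T) /\
  forall Y, proper_subset Y X -> ~ sat_theory Y (reduct_theory X T).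

(* Nested expressions: no implications other than those of the form
   neg F (i.e. F -> bot, which includes top = bot -> bot). *)
Fixpoint nested {A : Type} (F : form A) : Prop :=
  match F with
  | Atom _ => True
  | Bot => True
  | And G H => nested G /\ nested H
  | Or G H => nested G /\ nested H
  | Imp G H => nested G /\ H = Bot
  end.

(* A rule F <- G is represented by the pair (F, G) = (head, body). *)
Definition rule (A : Type) := (form A * form A)%type.

Definition program (A : Type) := rule A -> Prop.

Definition nested_program {A : Type} (P : program A) : Prop :=
  forall r, P r -> nested (fst r) /\ nested (snd r).

Definition rule_formula {A : Type} (r : rule A) : form A := Imp (snd r) (fst r).

Definition program_theory {A : Type} (P : program A) : theory A :=
  fun H => exists r, P r /\ H = rule_formula r.

(* LTT reduct of a nested expression: replace each maximal subformula of the
   form neg F by top if X |= neg F and by bot otherwise. *)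
Fixpoint ltt_reduct {A : Type} (X : atomset A) (F : form A) : form A :=
  match F with
  | Atom a => Atom a
  | Bot => Bot
  | And G H => And (ltt_reduct X G) (ltt_reduct X H)
  | Or G H => Or (ltt_reduct X G) (ltt_reduct X H)
  | Imp G Bot => if sat X (Imp G Bot) then Top else Bot
  | Imp G H => Imp (ltt_reduct X G) (ltt_reduct X H)
  end.

Definition ltt_reduct_program {A : Type} (X : atomset A) (P : program A) : program A :=
  fun r' => exists r, P r /\ r' = (ltt_reduct X (fst r), ltt_reduct X (snd r)).

Definition sat_program {A : Type} (Y : atomset A) (P : program A) : Prop :=
  forall r, P r -> sat Y (rule_formula r) = true.

Definition stable_model_LTT {A : Type} (P : program A) (X : atomset A) : Prop :=
  sat_program X (ltt_reduct_program X P) /\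
  forall Y, proper_subset Y X -> ~ sat_program Y (ltt_reduct_program X P).

(* The proof compares, for a set Y of atoms contained in X, the satisfaction
   of the two reducts formula by formula.
   - The LTT reduct of a nested expression contains implications only as the
     constants top/bot, hence it is monotone in Y, and X satisfies it iff X
     satisfies the original expression.
   - For a nested expression F and Y contained in X,
       Y |= F^X   iff   X |= F  and  Y |= ltt_reduct X F;
     the same holds for the rule formula G -> F of a rule F <- G.
   Consequently X satisfies the theory reduct iff X satisfies Pi iff X
   satisfies Pi^{underline X}, and when X |= Pi a subset Y of X satisfies the
   theory reduct iff it satisfies Pi^{underline X}.  Both minimality
   conditions therefore quantify over the same sets, which gives the
   theorem. *)

From Stdlib Require Import Bool Setoid.

Definition subset {A : Type} (Y Z : atomset A) : Prop :=
  forall a, Y a = true -> Z a = true.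

Definition ltt_reduct_rule {A : Type} (X : atomset A) (r : rule A) : rule A :=
  (ltt_reduct X (fst r), ltt_reduct X (snd r)).

Section NestedExpressions.

Context {A : Type}.
Implicit Types (X Y Z : atomset A) (F : form A).

Lemma ltt_reduct_sat_self X F :
  nested F -> sat X (ltt_reduct X F) = sat X F.
Proof.
  induction F as [a| |F1 IH1 F2 IH2|F1 IH1 F2 IH2|F1 IH1 F2 IH2];
    simpl; intros Hn; try reflexivity.
  - destruct Hn; rewrite IH1, IH2; auto.
  - destruct Hn; rewrite IH1, IH2; auto.
  - destruct Hn as [_ ->]; simpl. destruct (sat X F1); reflexivity.
Qed.

(* The LTT reduct of a nested expression is positive (negations have been
   replaced by constants), so its satisfaction is monotone in the atoms. *)
Lemma ltt_reduct_monotone X Y Z F :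
  nested F -> subset Y Z ->
  sat Y (ltt_reduct X F) = true -> sat Z (ltt_reduct X F) = true.
Proof.
  intros Hn Hsub.
  induction F as [a| |F1 IH1 F2 IH2|F1 IH1 F2 IH2|F1 IH1 F2 IH2];
    simpl in *; auto.
  - destruct Hn as [N1 N2]; intros [S1 S2]%andb_true_iff.
    rewrite IH1, IH2; auto.
  - destruct Hn as [N1 N2]; intros [S1|S2]%orb_true_iff.
    + rewrite IH1; auto.
    + rewrite IH2, orb_true_r; auto.
  - destruct Hn as [_ ->]; simpl. destruct (implb (sat X F1) false); auto.
Qed.

Lemma ltt_reduct_sat_sub X Y F :
  nested F -> subset Y X ->
  sat Y (ltt_reduct X F) = true -> sat X F = true.
Proof.
  intros Hn Hsub HY.
  rewrite <- (ltt_reduct_sat_self X F Hn).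
  exact (ltt_reduct_monotone X Y X F Hn Hsub HY).
Qed.

Lemma reduct_sat_nested X Y F :
  nested F -> subset Y X ->
  sat Y (reduct X F) = sat X F && sat Y (ltt_reduct X F).
Proof.
  intros Hn Hsub.
  induction F as [a| |F1 IH1 F2 IH2|F1 IH1 F2 IH2|F1 IH1 F2 IH2]; simpl in *.
  - specialize (Hsub a).
    destruct (X a); simpl; destruct (Y a); auto; discriminate (Hsub eq_refl).
  - reflexivity.
  - destruct Hn as [N1 N2].
    destruct (sat X F1), (sat X F2); simpl; rewrite ?IH1, ?IH2 by auto;
      reflexivity.
  - destruct Hn as [N1 N2].
    pose proof (ltt_reduct_sat_sub X Y F1 N1 Hsub) as M1.
    pose proof (ltt_reduct_sat_sub X Y F2 N2 Hsub) as M2.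
    destruct (sat X F1), (sat X F2); simpl; rewrite ?IH1, ?IH2 by auto;
      destruct (sat Y (ltt_reduct X F1)), (sat Y (ltt_reduct X F2));
      simpl; auto; first [discriminate (M1 eq_refl) | discriminate (M2 eq_refl)].
  - destruct Hn as [N1 ->]; simpl.
    destruct (sat X F1); simpl; rewrite ?IH1 by auto; reflexivity.
Qed.

Lemma reduct_sat_rule X Y (r : rule A) :
  nested (fst r) -> nested (snd r) -> subset Y X ->
  sat Y (reduct X (rule_formula r))
  = sat X (rule_formula r) && sat Y (rule_formula (ltt_reduct_rule X r)).
Proof.
  destruct r as [H B]; unfold rule_formula, ltt_reduct_rule; simpl.
  intros NH NB Hsub.
  destruct (implb (sat X B) (sat X H)) eqn:EX; simpl; auto.
  rewrite !reduct_sat_nested by auto.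
  pose proof (ltt_reduct_sat_sub X Y B NB Hsub) as MB.
  destruct (sat Y (ltt_reduct X B)) eqn:LB; simpl.
  - rewrite (MB eq_refl) in EX |- *; simpl in *. rewrite EX. reflexivity.
  - destruct (sat X B); reflexivity.
Qed.

End NestedExpressions.

Section Programs.

Context {A : Type} {P : program A}.
Hypothesis HP : nested_program P.

Lemma sat_ltt_reduct_program Y X :
  sat_program Y (ltt_reduct_program X P)
  <-> forall r, P r -> sat Y (rule_formula (ltt_reduct_rule X r)) = true.
Proof.
  split.
  - intros HY r Hr. apply HY. exists r; auto.
  - intros HY r' [r [Hr ->]]. exact (HY r Hr).
Qed.

Lemma ltt_reduct_program_sat_self X :
  sat_program X (ltt_reduct_program X P) <-> sat_program X P.
Proof.
  rewrite sat_ltt_reduct_program.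
  split; intros HX r Hr; destruct (HP r Hr) as [NH NB];
    specialize (HX r Hr); unfold rule_formula, ltt_reduct_rule in *; simpl in *;
    rewrite !ltt_reduct_sat_self in * by auto; exact HX.
Qed.

Lemma reduct_theory_sat Y X :
  subset Y X ->
  sat_theory Y (reduct_theory X (program_theory P))
  <-> sat_program X P /\ sat_program Y (ltt_reduct_program X P).
Proof.
  intros Hsub. rewrite sat_ltt_reduct_program.
  assert (Hrule : forall r, P r -> sat Y (reduct X (rule_formula r))
            = sat X (rule_formula r)
              && sat Y (rule_formula (ltt_reduct_rule X r))).
  { intros r Hr. destruct (HP r Hr). apply reduct_sat_rule; auto. }
  split.
  - intros HY.
    assert (Hr' : forall r, P r -> sat X (rule_formula r) = true
                   /\ sat Y (rule_formula (ltt_reduct_rule X r)) = true).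
    { intros r Hr. apply andb_true_iff. rewrite <- (Hrule r Hr).
      apply HY. exists (rule_formula r). split; [exists r; auto | reflexivity]. }
    split; intros r Hr; apply (Hr' r Hr).
  - intros [HX HY] G [F [[r [Hr ->]] ->]].
    rewrite (Hrule r Hr). apply andb_true_iff. auto.
Qed.

End Programs.

Theorem proposition2 (A : Type) (P : program A) (X : atomset A) :
  nested_program P ->
  (stable_model_theory (program_theory P) X <-> stable_model_LTT P X).
Proof.
  intros HP.
  assert (Hrefl : subset X X) by (intros a; auto).
  assert (Htheory_X : sat_theory X (reduct_theory X (program_theory P))
                      <-> sat_program X P).
  { rewrite (reduct_theory_sat HP X X Hrefl), (ltt_reduct_program_sat_self HP).
    tauto. }
  assert (Hsubsets : sat_program X P -> forall Y, proper_subset Y X ->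
            sat_theory Y (reduct_theory X (program_theory P))
            <-> sat_program Y (ltt_reduct_program X P)).
  { intros HX Y [Hsub _]. rewrite (reduct_theory_sat HP Y X Hsub). tauto. }
  unfold stable_model_theory, stable_model_LTT.
  rewrite Htheory_X, (ltt_reduct_program_sat_self HP).
  split; intros [HX Hmin]; split; auto; intros Y HY.
  - rewrite <- (Hsubsets HX Y HY). exact (Hmin Y HY).
  - rewrite (Hsubsets HX Y HY). exact (Hmin Y HY).
Qed.
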